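(* Let $m\ge2$ and $n\ge m$. For every real $\beta>0$, there is no proportional mechanism $(A,q)$ for the goods allocation problem over the set $\mathcal{C}=\mathbb{R}_{\ge0}^{m\times n}$ of general instances such that $\beta\cdot\min_{i\in[m]}v_i(A(v)_i)\ge\mathrm{OPT}(v)$ for every $v\in\mathcal{C}$.
   Context: Goods allocation: $m$ agents $[m]$, $n$ goods $[n]$; an instance is a matrix $v\in\mathbb{R}_{\ge0}^{m\times n}$, $v_{i,j}$ the value of agent $i$ for good $j$, $v_i(S)=\sum_{j\in S}v_{i,j}$. An allocation is a tuple of pairwise disjoint subsets of $[n]$ with union $[n]$. A mechanism $(A,q)$ over $\mathcal{I}$ assigns to each $v$ an allocation $A(v)$ and transfers $q(v)\in\mathbb{R}^m$ (written $A_i,q_i$); it is proportional if for every $v\in\mathcal{I}$ and $i\in[m]$: $v_i(A_i)-q_i\ge\frac1m\sum_{j\in[m]}(v_i(A_j)-q_j)$. $\mathrm{OPT}(v)=\max_X\min_{i\in[m]}v_i(X_i)$ over all allocations $X$ (optimal egalitarian welfare). *)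

From HB Require Import structures.
From mathcomp Require Import all_boot all_order all_algebra.
From mathcomp Require Import reals.
Set Implicit Arguments. Unset Strict Implicit. Unset Printing Implicit Defensive.
Import Order.TTheory GRing.Theory Num.Theory.
Local Open Scope ring_scope.

(* An instance is v : 'M[R]_(m, n); v i j is the value of agent i for good j. *)

(* An allocation: each good j is assigned to exactly one agent X j; the bundle
   of agent i is [set j | X j == i].  Such maps are in bijection with tuples
   (X_1,...,X_m) of pairwise disjoint subsets of [n] with union [n]. *)
Definition allocation (m n : nat) := {ffun 'I_n -> 'I_m}.

Definition bundle (m n : nat) (X : allocation m n) (i : 'I_m) : {set 'I_n} :=
  [set j | X j == i].

Definition val_of (R : realType) (m n : nat) (v : 'M[R]_(m, n)) (i : 'I_m)
  (S : {set 'I_n}) : R := \sum_(j in S) v i j.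

Definition minlist (R : realType) (s : seq R) : R :=
  foldr Num.min (head 0 s) s.

(* min_{i in [m]} v_i(X_i)  (meaningful for m >= 1) *)
Definition min_util (R : realType) (m n : nat) (v : 'M[R]_(m, n))
  (X : allocation m n) : R :=
  minlist [seq val_of v i (bundle X i) | i <- enum 'I_m].

Definition OPT (R : realType) (m n : nat) (v : 'M[R]_(m, n)) : R :=
  let s := [seq min_util v X | X <- enum {ffun 'I_n -> 'I_m}] in
  foldr Num.max (head 0 s) s.

Definition nonneg_instance (R : realType) (m n : nat) (v : 'M[R]_(m, n)) : Prop :=
  forall i j, 0 <= v i j.

Definition proportional (R : realType) (m n : nat)
  (C : 'M[R]_(m, n) -> Prop)
  (A : 'M[R]_(m, n) -> allocation m n) (q : 'M[R]_(m, n) -> 'I_m -> R) : Prop :=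
  forall v, C v -> forall i : 'I_m,
    val_of v i (bundle (A v) i) - q v i >=
    m%:R^-1 * \sum_(j < m) (val_of v i (bundle (A v) j) - q v j).

(** The instance that defeats every proportional approximation: agent [0]
    values good [1] at [K = (n+1) m], agent [1] values only good [1] (at 1),
    and every agent [i] values good [i] at 1.  Giving good [i] to agent [i]
    shows [OPT >= 1], so a [beta]-approximation must give every agent positive
    value; in particular good [1] goes to agent [1], and then no agent gets
    more than 1 per good, so the welfare is at most [n].  Summing the
    proportionality constraints over all agents the transfers cancel, and the
    welfare is at least the total value divided by [m], i.e. at least
    [K / m = n + 1]. *)

From HB Require Import structures.
From mathcomp Require Import all_boot all_order all_algebra.
From mathcomp Require Import reals.
Import Order.TTheory GRing.Theory Num.Theory.
Local Open Scope ring_scope.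

Section MinMaxLists.
Context {R : realType}.

Lemma minlist_le (s : seq R) x : x \in s -> minlist s <= x.
Proof.
rewrite /minlist; elim: s (head 0 s) => [//|a s IH] x0 /=.
by rewrite inE ge_min => /orP[/eqP ->|/IH ->]; rewrite ?lexx ?orbT.
Qed.

Lemma minlist_ge (s : seq R) c :
  s != [::] -> (forall x, x \in s -> c <= x) -> c <= minlist s.
Proof.
rewrite /minlist; case: s => [//|a s] _ /= Hs.
rewrite le_min Hs ?mem_head //=.
elim: s Hs => [|b s IH] Hs /=; first exact: Hs (mem_head _ _).
rewrite le_min Hs ?inE ?eqxx ?orbT //= IH // => x Hx.
by apply: Hs; move: Hx; rewrite !inE => /orP[->|->]; rewrite ?orbT.
Qed.

Lemma foldr_max_ge (s : seq R) x0 x : x \in s -> x <= foldr Num.max x0 s.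
Proof.
elim: s => [//|a s IH] /=.
by rewrite inE le_max => /orP[/eqP ->|/IH ->]; rewrite ?lexx ?orbT.
Qed.

End MinMaxLists.

Section Allocations.
Context {R : realType} {m n : nat}.
Implicit Types (v : 'M[R]_(m, n)) (X : allocation m n).

Definition welfare v X : R := \sum_(i < m) val_of v i (bundle X i).

Lemma sum_over_bundles X (F : 'I_m -> 'I_n -> R) :
  \sum_(i < m) \sum_(j in bundle X i) F i j = \sum_(j < n) F (X j) j.
Proof.
rewrite [RHS](partition_big X xpredT) //=.
apply: eq_bigr => i _; apply: eq_big => j; first by rewrite inE.
by rewrite inE => /eqP ->.
Qed.

Lemma welfareE v X : welfare v X = \sum_(j < n) v (X j) j.
Proof. exact: sum_over_bundles. Qed.

Lemma min_util_le v X i : min_util v X <= val_of v i (bundle X i).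
Proof. by apply: minlist_le; apply: map_f; rewrite mem_enum. Qed.

Lemma min_util_ge v X c :
  (0 < m)%N -> (forall i, c <= val_of v i (bundle X i)) -> c <= min_util v X.
Proof.
move=> m_gt0 Hc; apply: minlist_ge => [|x /mapP[i _ ->] //].
by rewrite -size_eq0 size_map size_enum_ord -lt0n.
Qed.

Lemma min_util_le_OPT v X : min_util v X <= OPT v.
Proof. by apply: foldr_max_ge; apply: map_f; rewrite mem_enum. Qed.

Lemma val_of_pos_mem v i g (S : {set 'I_n}) :
  (forall j, j != g -> v i j = 0) -> 0 < val_of v i S -> g \in S.
Proof.
move=> only_g; apply: contraTT => gNS; rewrite -leNgt le_eqVlt; apply/orP; left.
apply/eqP; apply: big1 => j jS; apply: only_g.
by apply: contraNneq gNS => <-.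
Qed.

Lemma entry_le_val_of v i j (S : {set 'I_n}) :
  nonneg_instance v -> j \in S -> v i j <= val_of v i S.
Proof.
move=> v_ge0 jS; rewrite /val_of (bigD1 j) //= lerDl.
by apply: sumr_ge0 => *; apply: v_ge0.
Qed.

Lemma entry_le_total v i j :
  nonneg_instance v -> v i j <= \sum_(k < m) \sum_(l < n) v k l.
Proof.
move=> v_ge0; rewrite (bigD1 i) //= (bigD1 j) //= -addrA lerDl.
by rewrite addr_ge0 ?sumr_ge0 // => *; rewrite ?sumr_ge0.
Qed.

Lemma proportional_welfare_ge (C : 'M[R]_(m, n) -> Prop) A q v :
  (0 < m)%N -> proportional C A q -> C v ->
  m%:R^-1 * \sum_(i < m) \sum_(j < n) v i j <= welfare v (A v).
Proof.
move=> m_gt0 Hprop Cv; set Q := \sum_(k < m) q v k.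
have row_sum i : \sum_(k < m) (val_of v i (bundle (A v) k) - q v k)
                 = \sum_(j < n) v i j - Q.
  by rewrite sumrB (sum_over_bundles (A v) (fun _ j => v i j)).
have := @ler_sum _ _ (index_enum 'I_m) xpredT _ _ (fun i _ => Hprop v Cv i).
under eq_bigr do rewrite row_sum.
rewrite -mulr_sumr !sumrB sumr_const card_ord -/Q mulrBr -(mulr_natr Q) (mulrC Q).
by rewrite mulKf ?pnatr_eq0 -?lt0n // lerD2r.
Qed.

End Allocations.

Section HardInstance.
Variables (R : realType) (m n : nat).
Hypotheses (m_ge2 : (2 <= m)%N) (m_le_n : (m <= n)%N).

Let m_gt0 : (0 < m)%N := ltnW m_ge2.
Let n_gt1 : (1 < n)%N := leq_trans m_ge2 m_le_n.
Let agent0 : 'I_m := Ordinal m_gt0.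
Let agent1 : 'I_m := Ordinal m_ge2.
Let good1 : 'I_n := Ordinal n_gt1.

Definition hard_instance : 'M[R]_(m, n) := \matrix_(i, j)
  if val j == val i then 1
  else if (val i == 0) && (val j == 1) then (n.+1 * m)%:R else 0.

Lemma hard_instanceE i j : hard_instance i j =
  if val j == val i then 1
  else if (val i == 0) && (val j == 1) then (n.+1 * m)%:R else 0.
Proof. by rewrite mxE. Qed.

Lemma hard_instance_nonneg : nonneg_instance hard_instance.
Proof. by move=> i j; rewrite hard_instanceE; case: ifP => _ //; case: ifP. Qed.

Lemma hard_instance_OPT_ge1 : 1 <= OPT hard_instance.
Proof.
pose diag : allocation m n :=
  [ffun j => if insub (val j) is Some i then i else agent0].
apply: le_trans (min_util_le_OPT _ diag); apply: min_util_ge => // i.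
have diag_i : diag (widen_ord m_le_n i) = i.
  by rewrite ffunE /= insubT //; move=> ?; apply: val_inj.
rewrite -[1](_ : hard_instance i (widen_ord m_le_n i) = 1); last first.
  by rewrite hard_instanceE eqxx.
by apply: entry_le_val_of; rewrite ?inE ?diag_i //; apply: hard_instance_nonneg.
Qed.

Lemma hard_instance_agent1 (X : allocation m n) :
  0 < val_of hard_instance agent1 (bundle X agent1) -> X good1 = agent1.
Proof.
move=> pos; have : good1 \in bundle X agent1.
  apply: val_of_pos_mem pos => j j_ne; rewrite hard_instanceE /=.
  case: ifP => [/eqP j1|//]; by case/eqP: j_ne; apply: val_inj.
by rewrite inE => /eqP.
Qed.

Lemma hard_instance_welfare_le (X : allocation m n) :
  X good1 = agent1 -> welfare hard_instance X <= n%:R.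
Proof.
move=> X1; rewrite welfareE -[n in n%:R]card_ord -sumr_const.
apply: ler_sum => j _; rewrite hard_instanceE; case: ifP => // _.
case: ifP => [/andP[/eqP X0 /eqP j1]|_] //.
have j_good1 : j = good1 by apply: val_inj.
by move: X0; rewrite j_good1 X1.
Qed.

Lemma hard_instance_total_ge :
  (n.+1 * m)%:R <= \sum_(i < m) \sum_(j < n) hard_instance i j :> R.
Proof.
apply: le_trans (entry_le_total _ agent0 good1 hard_instance_nonneg).
by rewrite hard_instanceE.
Qed.

End HardInstance.

Theorem mainTheorem8 (R : realType) (m n : nat) :
  (2 <= m)%N -> (m <= n)%N ->
  forall beta : R, 0 < beta ->
  ~ exists (A : 'M[R]_(m, n) -> allocation m n) (q : 'M[R]_(m, n) -> 'I_m -> R),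
      proportional (@nonneg_instance R m n) A q /\
      (forall v : 'M[R]_(m, n), nonneg_instance v ->
         beta * min_util v (A v) >= OPT v).
Proof.
move=> m_ge2 m_le_n beta beta_gt0 [A [q [Hprop Happrox]]].
have m_gt0 : (0 < m)%N := ltnW m_ge2.
set v := hard_instance R m n.
have v_ge0 : nonneg_instance v := hard_instance_nonneg R m n.
have min_pos : 0 < min_util v (A v).
  rewrite -(pmulr_rgt0 _ beta_gt0); apply: lt_le_trans (Happrox v v_ge0).
  exact: lt_le_trans ltr01 (hard_instance_OPT_ge1 R m n m_ge2 m_le_n).
have good1_to_agent1 := hard_instance_agent1 R m n m_ge2 m_le_n (A v)
  (lt_le_trans min_pos (min_util_le _ _ _)).
have W_le := hard_instance_welfare_le R m n m_ge2 m_le_n (A v) good1_to_agent1.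
have W_ge_avg := proportional_welfare_ge _ _ _ v m_gt0 Hprop v_ge0.
have T_ge := hard_instance_total_ge R m n m_ge2 m_le_n.
have W_gt_n : n.+1%:R <= welfare v (A v).
  apply: le_trans W_ge_avg; rewrite ler_pdivlMl ?ltr0n // -natrM mulnC.
  by apply: le_trans T_ge.
by have := le_trans W_gt_n W_le; rewrite ler_nat ltnn.
Qed.
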